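(* Let $f\in C^3([0,1])$ be such that $f,f',f'',f'''\geq 0$ on $[0,1]$. Then for every integer $N\geq 1$, $$0\leq \sum_{i=0}^{N}f\left(\frac{i}{N}\right)-N\int_0^1 f(t)\,dt-\frac{f(0)+f(1)}{2}\leq \frac{f'(1)-f'(0)}{4N}.$$ *)

From Stdlib Require Import Reals Lra.
From Coquelicot Require Import Coquelicot.
Open Scope R_scope.

Definition deriv_on01 (f g : R -> R) : Prop :=
  forall x, 0 <= x <= 1 ->
    filterlim (fun y => (f y - f x) / (y - x))
      (within (fun y => 0 <= y <= 1 /\ y <> x) (locally x)) (locally (g x)).

Definition cont_on01 (f : R -> R) : Prop :=
  forall x, 0 <= x <= 1 ->
    filterlim f (within (fun y => 0 <= y <= 1) (locally x)) (locally (f x)).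

Definition C3_on01 (f f1 f2 f3 : R -> R) : Prop :=
  deriv_on01 f f1 /\ deriv_on01 f1 f2 /\ deriv_on01 f2 f3 /\ cont_on01 f3.

From Stdlib Require Import Reals Lra Lia.
From Coquelicot Require Import Coquelicot.
Open Scope R_scope.

(* Only the convexity of f (f'' >= 0) is needed.  On a cell [a, b] of the
   uniform partition, the chord of f lies above f and the mean of the two
   tangent lines at a and b lies below it; integrating these affine bounds gives
     0 <= (b - a) (f a + f b) / 2 - int_a^b f <= (f'(b) - f'(a)) (b - a)^2 / 4,
   and for b - a = 1/N the right-hand bounds telescope to (f'(1) - f'(0)) / (4N). *)

(* Composing with [clamp01] extends a function on [0,1] to all of R while keeping
   continuity, so Coquelicot's results for functions on R (MVT_gen,
   ex_RInt_continuous) apply. *)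
Definition clamp01 (y : R) : R := Rmax 0 (Rmin 1 y).

Lemma clamp01_in (y : R) : 0 <= clamp01 y <= 1.
Proof. unfold clamp01, Rmax, Rmin; repeat destruct Rle_dec; lra. Qed.

Lemma clamp01_id (y : R) : 0 <= y <= 1 -> clamp01 y = y.
Proof. intros; unfold clamp01, Rmax, Rmin; repeat destruct Rle_dec; lra. Qed.

Lemma clamp01_lip (y z : R) : Rabs (clamp01 y - clamp01 z) <= Rabs (y - z).
Proof.
  unfold clamp01, Rmax, Rmin; repeat destruct Rle_dec;
    unfold Rabs; repeat destruct Rcase_abs; lra.
Qed.

Lemma cont_on01_clamp01 (F : R -> R) (x : R) :
  cont_on01 F -> continuous (fun y => F (clamp01 y)) x.
Proof.
  intros HF.
  apply (filterlim_comp _ _ _ clamp01 F _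
           (within (fun y => 0 <= y <= 1) (locally (clamp01 x)))).
  - intros P [eps HP]. exists eps. intros y Hy. apply HP; [| apply clamp01_in].
    change (Rabs (clamp01 y - clamp01 x) < eps).
    eapply Rle_lt_trans; [apply clamp01_lip | exact Hy].
  - apply HF, clamp01_in.
Qed.

Lemma cont_on01_ex_RInt (F : R -> R) (a b : R) :
  cont_on01 F -> 0 <= a -> a <= b -> b <= 1 -> ex_RInt F a b.
Proof.
  intros HF Ha Hab Hb. apply ex_RInt_ext with (fun y => F (clamp01 y)).
  - intros x Hx. rewrite Rmin_left, Rmax_right in Hx by lra.
    rewrite clamp01_id by lra. reflexivity.
  - apply (@ex_RInt_continuous R_CompleteNormedModule).
    intros z _. now apply cont_on01_clamp01.
Qed.

Section Deriv01.

Variables F G : R -> R.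
Hypothesis HF : deriv_on01 F G.

Lemma deriv_on01_ball (x eps : R) : 0 <= x <= 1 -> 0 < eps ->
  exists d, 0 < d /\ forall y, 0 <= y <= 1 -> y <> x -> Rabs (y - x) < d ->
    Rabs ((F y - F x) / (y - x) - G x) < eps.
Proof.
  intros Hx Heps.
  destruct (proj1 (filterlim_locally _ _) (HF x Hx) (mkposreal eps Heps)) as [d Hd].
  exists d; split; [apply cond_pos |].
  intros y Hy Hyx Hyd. now apply (Hd y).
Qed.

Lemma deriv_on01_cont : cont_on01 F.
Proof.
  intros x Hx. apply filterlim_locally. intros eps.
  destruct (deriv_on01_ball x 1 Hx Rlt_0_1) as [d [Hd Hq]].
  set (M := Rabs (G x) + 1).
  assert (HM : 0 < M) by (pose proof (Rabs_pos (G x)); unfold M; lra).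
  assert (Hr : 0 < Rmin d (eps / M)).
  { apply Rmin_pos; [lra | apply Rdiv_lt_0_compat; [apply cond_pos | lra]]. }
  exists (mkposreal _ Hr). intros y Hyx Hy.
  change (Rabs (y - x) < Rmin d (eps / M)) in Hyx. change (Rabs (F y - F x) < eps).
  destruct (Req_dec y x) as [-> | Hne].
  { rewrite Rminus_diag, Rabs_R0. apply cond_pos. }
  pose proof (Rmin_l d (eps / M)). pose proof (Rmin_r d (eps / M)).
  assert (Hyd : Rabs (y - x) < d) by lra.
  specialize (Hq y Hy Hne Hyd).
  set (q := (F y - F x) / (y - x)) in *.
  assert (Hslope : Rabs q <= M).
  { pose proof (Rabs_triang (q - G x) (G x)) as Htri.
    replace (q - G x + G x) with q in Htri by ring. unfold M; lra. }
  replace (F y - F x) with (q * (y - x)) by (unfold q; field; lra).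
  rewrite Rabs_mult.
  apply Rle_lt_trans with (M * Rabs (y - x)).
  { apply Rmult_le_compat_r; [apply Rabs_pos | exact Hslope]. }
  replace (pos eps) with (M * (eps / M)) by (field; lra).
  apply Rmult_lt_compat_l; lra.
Qed.

Lemma deriv_on01_interior (x : R) :
  0 < x < 1 -> is_derive (fun y => F (clamp01 y)) x (G x).
Proof.
  intros Hx.
  assert (Hr : 0 < Rmin x (1 - x)) by (apply Rmin_pos; lra).
  pose proof (Rmin_l x (1 - x)). pose proof (Rmin_r x (1 - x)).
  apply is_derive_ext_loc with F.
  { exists (mkposreal _ Hr). intros y Hy. change (Rabs (y - x) < Rmin x (1 - x)) in Hy.
    pose proof (Rle_abs (y - x)). pose proof (Rle_abs (- (y - x))). rewrite Rabs_Ropp in *.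
    rewrite clamp01_id by lra. reflexivity. }
  apply is_derive_Reals. intros eps Heps.
  destruct (deriv_on01_ball x eps ltac:(lra) Heps) as [d [Hd Hq]].
  assert (Hdr : 0 < Rmin d (Rmin x (1 - x))) by (apply Rmin_pos; lra).
  pose proof (Rmin_l d (Rmin x (1 - x))). pose proof (Rmin_r d (Rmin x (1 - x))).
  exists (mkposreal _ Hdr). intros h Hh Hhd. simpl in Hhd.
  pose proof (Rle_abs h). pose proof (Rle_abs (- h)). rewrite Rabs_Ropp in *.
  specialize (Hq (x + h) ltac:(lra) ltac:(lra)).
  replace (x + h - x) with h in Hq by ring. apply Hq; lra.
Qed.

Lemma deriv_on01_MVT (a b : R) : 0 <= a -> a <= b -> b <= 1 ->
  exists c, a <= c <= b /\ F b - F a = G c * (b - a).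
Proof.
  intros Ha Hab Hb.
  destruct (MVT_gen (fun y => F (clamp01 y)) a b G) as [c [Hc HMVT]];
    rewrite ?Rmin_left, ?Rmax_right in * by lra.
  - intros x Hx. apply deriv_on01_interior; lra.
  - intros x _. apply continuity_pt_filterlim, cont_on01_clamp01, deriv_on01_cont.
  - exists c; split; [exact Hc |]. now rewrite !clamp01_id in HMVT by lra.
Qed.

Lemma deriv_on01_nondecreasing (a b : R) : (forall x, 0 <= x <= 1 -> 0 <= G x) ->
  0 <= a -> a <= b -> b <= 1 -> F a <= F b.
Proof.
  intros HG Ha Hab Hb. destruct (deriv_on01_MVT a b Ha Hab Hb) as [c [Hc E]].
  assert (0 <= G c * (b - a)) by (apply Rmult_le_pos; [apply HG |]; lra).
  lra.
Qed.

Lemma deriv_on01_tangent_le :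
  (forall u v, 0 <= u -> u <= v -> v <= 1 -> G u <= G v) ->
  forall x t, 0 <= x <= 1 -> 0 <= t <= 1 -> F x + G x * (t - x) <= F t.
Proof.
  intros HG x t Hx Ht. destruct (Rle_dec x t) as [Hxt | Htx].
  - destruct (deriv_on01_MVT x t) as [c [Hc E]]; try lra.
    pose proof (HG x c ltac:(lra) ltac:(lra) ltac:(lra)). nra.
  - destruct (deriv_on01_MVT t x) as [c [Hc E]]; try lra.
    pose proof (HG c x ltac:(lra) ltac:(lra) ltac:(lra)). nra.
Qed.

End Deriv01.

Lemma RInt_affine (p q a b : R) :
  RInt (fun t => p + q * t) a b = p * (b - a) + q * (b * b - a * a) / 2.
Proof.
  apply is_RInt_unique.
  set (P := fun t => p * t + q * (t * t) / 2).
  replace (p * (b - a) + q * (b * b - a * a) / 2) with (minus (P b) (P a))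
    by (unfold minus, plus, opp, P; simpl; field).
  apply (@is_RInt_derive R_CompleteNormedModule).
  - intros x _. unfold P. auto_derive; [exact I | field].
  - intros x _. apply continuity_pt_filterlim. reg.
Qed.

Lemma ex_RInt_affine (p q a b : R) : ex_RInt (fun t => p + q * t) a b.
Proof.
  apply (@ex_RInt_continuous R_CompleteNormedModule). intros z _.
  apply continuity_pt_filterlim. reg.
Qed.

Section Trapezoid.

Variables f f1 : R -> R.
Hypothesis f_cont : cont_on01 f.
Hypothesis f_tangent :
  forall x t, 0 <= x <= 1 -> 0 <= t <= 1 -> f x + f1 x * (t - x) <= f t.

Lemma RInt_le_trapezoid (a b : R) : 0 <= a -> a < b -> b <= 1 ->
  RInt f a b <= (b - a) * (f a + f b) / 2.
Proof.
  intros Ha Hab Hb.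
  set (q := (f b - f a) / (b - a)).
  set (p := f a - q * a).
  apply Rle_trans with (RInt (fun t => p + q * t) a b).
  2: { rewrite RInt_affine. unfold p, q. right. field. lra. }
  apply RInt_le;
    [lra | apply cont_on01_ex_RInt; [exact f_cont | lra ..] | apply ex_RInt_affine |].
  intros t Ht.
  pose proof (f_tangent t a ltac:(lra) ltac:(lra)).
  pose proof (f_tangent t b ltac:(lra) ltac:(lra)).
  replace (p + q * t) with (((b - t) * f a + (t - a) * f b) / (b - a))
    by (unfold p, q; field; lra).
  apply Rmult_le_reg_r with (b - a); [lra |].
  unfold Rdiv. rewrite Rmult_assoc, Rinv_l, Rmult_1_r by lra.
  assert (0 <= b - t) by lra. assert (0 <= t - a) by lra.
  nra.
Qed.

Lemma trapezoid_le_RInt (a b : R) : 0 <= a -> a < b -> b <= 1 ->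
  (b - a) * (f a + f b) / 2 - (f1 b - f1 a) * (b - a) ^ 2 / 4 <= RInt f a b.
Proof.
  intros Ha Hab Hb.
  set (q := (f1 a + f1 b) / 2).
  set (p := (f a + f b) / 2 - f1 a * a / 2 - f1 b * b / 2).
  apply Rle_trans with (RInt (fun t => p + q * t) a b).
  { rewrite RInt_affine. unfold p, q. right. field. }
  apply RInt_le;
    [lra | apply ex_RInt_affine | apply cont_on01_ex_RInt; [exact f_cont | lra ..] |].
  intros t Ht.
  pose proof (f_tangent a t ltac:(lra) ltac:(lra)).
  pose proof (f_tangent b t ltac:(lra) ltac:(lra)).
  unfold p, q. lra.
Qed.

Definition trapezoid_error (N k : nat) : R :=
  sum_f_R0 (fun i => f (INR i / INR N)) k - (f 0 + f (INR k / INR N)) / 2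
  - INR N * RInt f 0 (INR k / INR N).

Lemma trapezoid_error_S (N k : nat) : (S k <= N)%nat ->
  trapezoid_error N k <= trapezoid_error N (S k)
  <= trapezoid_error N k + (f1 (INR (S k) / INR N) - f1 (INR k / INR N)) / (4 * INR N).
Proof.
  intros HkN.
  assert (HN : 0 < INR N) by (apply lt_0_INR; lia).
  set (a := INR k / INR N). set (b := INR (S k) / INR N).
  assert (Hba : b - a = / INR N) by (unfold a, b; rewrite S_INR; field; lra).
  assert (Hab : a < b) by (pose proof (Rinv_0_lt_compat _ HN); lra).
  assert (Ha : 0 <= a) by (unfold a; apply Rdiv_le_0_compat; [apply pos_INR | lra]).
  assert (Hb : b <= 1).
  { unfold b, Rdiv. rewrite <- (Rinv_r (INR N)) by lra.
    apply Rmult_le_compat_r; [left; apply Rinv_0_lt_compat; lra | apply le_INR; lia]. }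
  assert (Hchasles : RInt f 0 b = RInt f 0 a + RInt f a b).
  { symmetry. apply (@RInt_Chasles R_CompleteNormedModule);
      (apply cont_on01_ex_RInt; [exact f_cont | lra ..]). }
  assert (Hstep : trapezoid_error N (S k)
                  = trapezoid_error N k + ((f a + f b) / 2 - INR N * RInt f a b)).
  { unfold trapezoid_error. rewrite tech5. fold a b. rewrite Hchasles. lra. }
  pose proof (RInt_le_trapezoid a b Ha Hab Hb) as Hupper.
  pose proof (trapezoid_le_RInt a b Ha Hab Hb) as Hlower.
  rewrite Hba in Hupper, Hlower. rewrite Hstep.
  assert (HNupper : INR N * RInt f a b <= (f a + f b) / 2).
  { replace ((f a + f b) / 2) with (INR N * (/ INR N * (f a + f b) / 2)) by (field; lra).
    apply Rmult_le_compat_l; lra. }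
  assert (HNlower : (f a + f b) / 2 - (f1 b - f1 a) / (4 * INR N) <= INR N * RInt f a b).
  { replace ((f a + f b) / 2 - (f1 b - f1 a) / (4 * INR N))
      with (INR N * (/ INR N * (f a + f b) / 2 - (f1 b - f1 a) * (/ INR N) ^ 2 / 4))
      by (field; lra).
    apply Rmult_le_compat_l; lra. }
  lra.
Qed.

Lemma trapezoid_error_bounds (N k : nat) : (k <= N)%nat ->
  0 <= trapezoid_error N k <= (f1 (INR k / INR N) - f1 0) / (4 * INR N).
Proof.
  induction k as [| k IHk]; intros HkN.
  - unfold trapezoid_error. simpl. unfold Rdiv. rewrite Rmult_0_l, RInt_point.
    unfold zero; simpl. lra.
  - pose proof (trapezoid_error_S N k HkN). specialize (IHk ltac:(lia)).
    assert (Hsplit : (f1 (INR (S k) / INR N) - f1 0) / (4 * INR N)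
                     = (f1 (INR k / INR N) - f1 0) / (4 * INR N)
                       + (f1 (INR (S k) / INR N) - f1 (INR k / INR N)) / (4 * INR N))
      by (unfold Rdiv; ring).
    lra.
Qed.

End Trapezoid.

Theorem lemma2p2 (f f1 f2 f3 : R -> R) (N : nat) :
  C3_on01 f f1 f2 f3 ->
  (forall x, 0 <= x <= 1 -> 0 <= f x /\ 0 <= f1 x /\ 0 <= f2 x /\ 0 <= f3 x) ->
  (1 <= N)%nat ->
  0 <= sum_f_R0 (fun i => f (INR i / INR N)) N - INR N * RInt f 0 1 - (f 0 + f 1) / 2
  /\ sum_f_R0 (fun i => f (INR i / INR N)) N - INR N * RInt f 0 1 - (f 0 + f 1) / 2
     <= (f1 1 - f1 0) / (4 * INR N).
Proof.
  intros [Hf [Hf1 _]] Hpos HN.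
  assert (Hf1_mono : forall u v, 0 <= u -> u <= v -> v <= 1 -> f1 u <= f1 v).
  { intros u v Hu Huv Hv. apply (deriv_on01_nondecreasing f1 f2 Hf1); [| lra ..].
    intros x Hx. now destruct (Hpos x Hx) as (_ & _ & Hf2x & _). }
  pose proof (trapezoid_error_bounds f f1 (deriv_on01_cont f f1 Hf)
                (deriv_on01_tangent_le f f1 Hf Hf1_mono) N N (Nat.le_refl N)) as Hbounds.
  unfold trapezoid_error in Hbounds.
  replace (INR N / INR N) with 1 in Hbounds by (field; apply not_0_INR; lia).
  lra.
Qed.
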